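(* Consider the uncertain system \[ \dot x = f(x) + g(x)u + \varphi(x,u)\theta,\qquad \varphi(x,u)=[F(x)\;\; G(x)\,\mathrm{diag}(u)]\in\mathbb{R}^{n\times(p+m)}, \] with input $u\in\mathcal{U}\subseteq\mathbb{R}^m$, known locally Lipschitz $f,g$, known $F:\mathbb{R}^n\to\mathbb{R}^{n\times p}$, $G:\mathbb{R}^n\to\mathbb{R}^{n\times m}$, and unknown $\theta\in\mathbb{R}^{p+m}$ lying in a known hyperrectangle $\Theta=[\underline{\theta}_1,\overline{\theta}_1]\times\cdots\times[\underline{\theta}_{p+m},\overline{\theta}_{p+m}]$. Let $\{\Xi_k\}_{k\ge0}$ be the sequence of parameter sets generated by the integral set-membership identification scheme described below. Let $V:\mathbb{R}^n\to\mathbb{R}_{\ge0}$ be continuously differentiable and positive definite, $\mathcal{D}\subseteq\mathbb{R}^n$, and suppose there is a class $\mathcal{K}$ function $\gamma$ such that for all $x\in\mathcal{D}$ \[ \inf_{u\in\mathcal{U}}\sup_{\theta\in\Theta}\dot V(x,u,\theta)\le-\gamma(V(x)),\qquad \dot V(x,u,\theta)=L_fV(x)+L_gV(x)u+L_\varphi V(x,u)\theta. \] Then $\inf_{u\in\mathcal{U}}\sup_{\theta\in\Xi_k}\dot V(x,u,\theta)\le-\gamma(V(x))$ for all $x\in\mathcal{D}$ and all $k\in\mathbb{Z}_{\ge0}$.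
   Context: $L_fV=\nabla V\, f$, $L_gV=\nabla V\, g$, $L_\varphi V(x,u)=\nabla V(x)\varphi(x,u)$. Class $\mathcal{K}$: continuous strictly increasing $\gamma:[0,\infty)\to[0,\infty)$ with $\gamma(0)=0$. The identification scheme: let $x(\cdot)$ be a solution under an input signal $u(\cdot)$; fix $\Delta t>0$ and for $t\ge\Delta t$ let $\Delta x(t)=\int_{t-\Delta t}^t\dot x\,ds$, $\mathcal{F}(t)=\int_{t-\Delta t}^t f(x(s))ds$, $\mathcal{G}(t)=\int_{t-\Delta t}^t g(x(s))u(s)ds$, $\mathcal{S}(t)=\int_{t-\Delta t}^t\varphi(x(s),u(s))ds$. Let $\{t_k\}$ be strictly increasing with $t_0=0$; at time $t$ a history stack $\{\Delta x_j(t),\mathcal{F}_j(t),\mathcal{G}_j(t),\mathcal{S}_j(t)\}_{j\in\mathcal{M}(t)}$ consists of values of $(\Delta x,\mathcal{F},\mathcal{G},\mathcal{S})$ recorded at times in $[\Delta t,t]$. With $\varepsilon>0$, $\Xi_0=\Theta$, and for $k\ge1$, $\Xi_k=\prod_i[\underline\theta_i^k,\overline\theta_i^k]$ where $\underline\theta_i^k$ (resp. $\overline\theta_i^k$) is the minimum (resp. maximum) of $\theta_i$ over $\theta\in\Xi_{k-1}$ satisfying $-\varepsilon\mathbf{1}_n\le\Delta x_j(t_k)-\mathcal{F}_j(t_k)-\mathcal{G}_j(t_k)-\mathcal{S}_j(t_k)\theta\le\varepsilon\mathbf{1}_n$ for all $j\in\mathcal{M}(t_k)$ ($\mathbf{1}_n$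 the vector of ones, inequalities componentwise). *)

From HB Require Import structures.
From mathcomp Require Import all_boot all_order all_algebra.
From mathcomp Require Import all_classical all_reals all_analysis.
Set Implicit Arguments.
Unset Strict Implicit.
Unset Printing Implicit Defensive.
Import Order.TTheory GRing.Theory Num.Theory.
Import numFieldNormedType.Exports.
Local Open Scope classical_set_scope.
Local Open Scope ring_scope.

Section Defs.
Variable R : realType.

Definition wint (dt t : R) (h : R -> R) : R :=
  \int[lebesgue_measure]_(s in `[t - dt, t]) h s.

Definition wintegrable (dt t : R) (h : R -> R) : Prop :=
  lebesgue_measure.-integrable `[t - dt, t] (fun s => (h s)%:E).

Definition loc_lipschitz (a b c d : nat) (h : 'M[R]_(a, b) -> 'M[R]_(c, d)) :=
  forall x0 : 'M[R]_(a, b), exists r : R, exists L : R, 0 < r /\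
    forall y z, `|y - x0| < r -> `|z - x0| < r -> `|h y - h z| <= L * `|y - z|.

Definition phi (n p m : nat) (F : 'cV[R]_n -> 'M[R]_(n, p))
  (G : 'cV[R]_n -> 'M[R]_(n, m)) (x : 'cV[R]_n) (u : 'cV[R]_m) : 'M[R]_(n, p + m) :=
  row_mx (F x) (G x *m diag_mx u^T).

Definition box (q : nat) (lo hi : 'cV[R]_q) : set 'cV[R]_q :=
  [set th | forall i : 'I_q, lo i 0 <= th i 0 <= hi i 0].

(* one history-stack entry (Dx_j, F_j, G_j, S_j) *)
Definition entry (n q : nat) := ('cV[R]_n * 'cV[R]_n * 'cV[R]_n * 'M[R]_(n, q))%type.

Definition record (n p m : nat) (f : 'cV[R]_n -> 'cV[R]_n)
  (g : 'cV[R]_n -> 'M[R]_(n, m)) (F : 'cV[R]_n -> 'M[R]_(n, p))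
  (G : 'cV[R]_n -> 'M[R]_(n, m)) (x : R -> 'cV[R]_n) (xd : R -> 'cV[R]_n)
  (u : R -> 'cV[R]_m) (dt tau : R) : entry n (p + m) :=
  (\col_i wint dt tau (fun s => xd s i 0),
   \col_i wint dt tau (fun s => f (x s) i 0),
   \col_i wint dt tau (fun s => (g (x s) *m u s) i 0),
   \matrix_(i, j) wint dt tau (fun s => phi F G (x s) (u s) i j)).

Definition consistent (n q : nat) (A : set 'cV[R]_q) (stack : seq (entry n q))
  (eps : R) : set 'cV[R]_q :=
  [set th | A th /\ forall e, e \in stack -> forall i : 'I_n,
     - eps <= (e.1.1.1 - e.1.1.2 - e.1.2 - e.2 *m th) i 0 <= eps].

Fixpoint Xi_bounds (n q : nat) (lo0 hi0 : 'cV[R]_q) (tk : nat -> R)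
  (stack : R -> seq (entry n q)) (eps : R) (k : nat) : 'cV[R]_q * 'cV[R]_q :=
  match k with
  | 0 => (lo0, hi0)
  | k'.+1 =>
      let b := Xi_bounds lo0 hi0 tk stack eps k' in
      let S := consistent (box b.1 b.2) (stack (tk k)) eps in
      (\col_i inf [set th i 0 | th in S], \col_i sup [set th i 0 | th in S])
  end.

Definition Xi (n q : nat) (lo0 hi0 : 'cV[R]_q) (tk : nat -> R)
  (stack : R -> seq (entry n q)) (eps : R) (k : nat) : set 'cV[R]_q :=
  let b := Xi_bounds lo0 hi0 tk stack eps k in box b.1 b.2.

Definition Vdot (n p m : nat) (gradV : 'cV[R]_n -> 'rV[R]_n)
  (f : 'cV[R]_n -> 'cV[R]_n) (g : 'cV[R]_n -> 'M[R]_(n, m))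
  (F : 'cV[R]_n -> 'M[R]_(n, p)) (G : 'cV[R]_n -> 'M[R]_(n, m))
  (x : 'cV[R]_n) (u : 'cV[R]_m) (th : 'cV[R]_(p + m)) : R :=
  (gradV x *m f x) 0 0 + (gradV x *m g x *m u) 0 0
  + (gradV x *m phi F G x u *m th) 0 0.

Definition infsup (n p m : nat) (gradV : 'cV[R]_n -> 'rV[R]_n)
  (f : 'cV[R]_n -> 'cV[R]_n) (g : 'cV[R]_n -> 'M[R]_(n, m))
  (F : 'cV[R]_n -> 'M[R]_(n, p)) (G : 'cV[R]_n -> 'M[R]_(n, m))
  (U : set 'cV[R]_m) (A : set 'cV[R]_(p + m)) (x : 'cV[R]_n) : \bar R :=
  ereal_inf [set ereal_sup [set (Vdot gradV f g F G x u th)%:E | th in A]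
            | u in U].

Definition classK (gam : R -> R) : Prop :=
  {within `[0, +oo[, continuous gam} /\ gam 0 = 0 /\
  (forall a, 0 <= a -> 0 <= gam a) /\
  (forall a b, 0 <= a -> a < b -> gam a < gam b).

End Defs.

From HB Require Import structures.
From mathcomp Require Import all_boot all_order all_algebra.
From mathcomp Require Import all_classical all_reals all_analysis.
From mathcomp Require Import ring lra.
Import Order.TTheory GRing.Theory Num.Theory.
Import numFieldNormedType.Exports.
Local Open Scope classical_set_scope.
Local Open Scope ring_scope.

(* Integrating the dynamics over a window shows that the true parameter
   satisfies every recorded constraint with zero residual, so it survives
   every refinement step: each Xi_k is a nonempty box containing theta and
   contained in Xi_(k-1), hence in Theta.  Shrinking the parameter set can
   only decrease each sup over it, hence the inf-sup. *)

Section Rintegral_sum.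
Context {d} {T : measurableType d} {R : realType} {mu : {measure set T -> \bar R}}.
Context {D : set T} {I : Type} {h : I -> T -> R}.
Hypotheses (mD : measurable D) (ih : forall i, mu.-integrable D (EFin \o h i)).

Lemma integrable_Rsum (r : seq I) :
  mu.-integrable D (EFin \o (fun x => \sum_(i <- r) h i x)).
Proof.
elim: r => [|a r IHr].
  under eq_fun do rewrite big_nil; exact: integrable0.
under eq_fun do rewrite big_cons.
have := integrableD mD (ih a) IHr.
by apply: eq_integrable.
Qed.

Lemma Rintegral_sum (r : seq I) :
  \int[mu]_(x in D) (\sum_(i <- r) h i x) = \sum_(i <- r) \int[mu]_(x in D) h i x.
Proof.
elim: r => [|a r IHr].
  by under eq_fun do rewrite big_nil; rewrite Rintegral_cst // mul0r big_nil.
under eq_fun do rewrite big_cons.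
by rewrite RintegralD // ?IHr ?big_cons //; apply: integrable_Rsum.
Qed.

End Rintegral_sum.

Section Residual.
Context {R : realType}.

Definition residual {n q : nat} (e : entry R n q) (th : 'cV[R]_q) : 'cV[R]_n :=
  e.1.1.1 - e.1.1.2 - e.1.2 - e.2 *m th.

Variables (n p m : nat) (f : 'cV[R]_n -> 'cV[R]_n) (g : 'cV[R]_n -> 'M[R]_(n, m)).
Variables (F : 'cV[R]_n -> 'M[R]_(n, p)) (G : 'cV[R]_n -> 'M[R]_(n, m)).
Variables (x xd : R -> 'cV[R]_n) (u : R -> 'cV[R]_m) (theta : 'cV[R]_(p + m)).

Lemma residual_record_eq0 (dt tau : R) :
  (forall s, tau - dt <= s <= tau ->
     xd s = f (x s) + g (x s) *m u s + phi F G (x s) (u s) *m theta) ->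
  (forall i : 'I_n, wintegrable dt tau (fun s => f (x s) i 0)) ->
  (forall i : 'I_n, wintegrable dt tau (fun s => (g (x s) *m u s) i 0)) ->
  (forall (i : 'I_n) (j : 'I_(p + m)),
     wintegrable dt tau (fun s => phi F G (x s) (u s) i j)) ->
  residual (record f g F G x xd u dt tau) theta = 0.
Proof.
move=> ode intf intg intphi; apply/matrixP => i k; rewrite ord1 {k}.
rewrite !mxE; under eq_bigr do rewrite mxE.
have mW : measurable (`[tau - dt, tau] : set (measurableTypeR R)).
  exact: measurable_itv.
set phith := fun j s => phi F G (x s) (u s) i j * theta j 0.
have intphith j : lebesgue_measure.-integrable `[tau - dt, tau] (EFin \o phith j).
  by have := integrableZr mW (theta j 0) (intphi i j); apply: eq_integrable.
have xd_sum : wint dt tau (fun s => xd s i 0) =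
    wint dt tau (fun s => f (x s) i 0 + (g (x s) *m u s) i 0 + \sum_j phith j s).
  apply: eq_Rintegral => s /set_mem /=; rewrite in_itv /= => Ws.
  by rewrite ode // !mxE.
have intfg : lebesgue_measure.-integrable `[tau - dt, tau]
    (EFin \o (fun s => f (x s) i 0 + (g (x s) *m u s) i 0)).
  by have := integrableD mW (intf i) (intg i); apply: eq_integrable.
rewrite xd_sum /wint RintegralD //; last exact: integrable_Rsum.
have int_phith j : \int[lebesgue_measure]_(s in `[tau - dt, tau]) phith j s =
    wint dt tau (fun s => phi F G (x s) (u s) i j) * theta j 0.
  exact: (RintegralZr _ mW (intphi i j)).
rewrite (RintegralD mW (intf i) (intg i)) (Rintegral_sum mW intphith).
rewrite (eq_bigr _ (fun j _ => int_phith j)).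
ring.
Qed.

End Residual.

Section BoundingBox.
Context {R : realType} {q : nat}.

Definition bounding_box (S : set 'cV[R]_q) : set 'cV[R]_q :=
  box (\col_i inf [set th i 0 | th in S]) (\col_i sup [set th i 0 | th in S]).

Context {lo hi : 'cV[R]_q} {S : set 'cV[R]_q}.
Hypothesis S_box : S `<=` box lo hi.

Let coord_lbound (i : 'I_q) : lbound [set th i 0 | th in S] (lo i 0).
Proof. by move=> _ [th /S_box /(_ i) /andP[? ?] <-]. Qed.

Let coord_ubound (i : 'I_q) : ubound [set th i 0 | th in S] (hi i 0).
Proof. by move=> _ [th /S_box /(_ i) /andP[? ?] <-]. Qed.

Lemma sub_bounding_box : S `<=` bounding_box S.
Proof.
move=> th Sth i; rewrite !mxE; have inS : [set th i 0 | th in S] (th i 0) by exists th.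
apply/andP; split.
- by apply: ge_inf => //; exists (lo i 0); exact: coord_lbound.
- by apply: ub_le_sup => //; exists (hi i 0); exact: coord_ubound.
Qed.

Lemma bounding_box_sub : S !=set0 -> bounding_box S `<=` box lo hi.
Proof.
move=> [th0 Sth0] th bth i; have /andP[] := bth i; rewrite !mxE => lb ub.
have ne : [set th i 0 | th in S] !=set0 by exists (th0 i 0), th0.
apply/andP; split.
- exact: le_trans (lb_le_inf ne (coord_lbound i)) lb.
- exact: le_trans ub (ge_sup ne (coord_ubound i)).
Qed.

End BoundingBox.

Section Refinement.
Variables (R : realType) (n q : nat) (lo0 hi0 theta : 'cV[R]_q).
Variables (tk : nat -> R) (stack : R -> seq (entry R n q)) (eps : R).
Hypothesis theta_Theta : box lo0 hi0 theta.
Hypothesis theta_fits : forall t e, e \in stack t ->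
  forall i : 'I_n, - eps <= residual e theta i 0 <= eps.

Let Xi_ := Xi lo0 hi0 tk stack eps.

Lemma XiS k : Xi_ k.+1 = bounding_box (consistent (Xi_ k) (stack (tk k.+1)) eps).
Proof. by []. Qed.

Lemma consistent_sub (A : set 'cV[R]_q) t : consistent A (stack t) eps `<=` A.
Proof. by move=> th []. Qed.

Lemma Xi_theta k : Xi_ k theta.
Proof.
elim: k => [|k IHk] //; rewrite XiS.
apply: (sub_bounding_box (consistent_sub (Xi_ k) (tk k.+1))).
by split=> //; exact: theta_fits.
Qed.

Lemma Xi_sub_Theta k : Xi_ k `<=` box lo0 hi0.
Proof.
elim: k => [|k IHk] //; rewrite XiS.
apply: subset_trans IHk.
apply: (bounding_box_sub (consistent_sub (Xi_ k) (tk k.+1))).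
by exists theta; split; [exact: Xi_theta | exact: theta_fits].
Qed.

End Refinement.

Lemma le_infsup (R : realType) (n p m : nat) (gradV : 'cV[R]_n -> 'rV[R]_n)
  (f : 'cV[R]_n -> 'cV[R]_n) (g : 'cV[R]_n -> 'M[R]_(n, m))
  (F : 'cV[R]_n -> 'M[R]_(n, p)) (G : 'cV[R]_n -> 'M[R]_(n, m))
  (U : set 'cV[R]_m) (A B : set 'cV[R]_(p + m)) (y : 'cV[R]_n) :
  A `<=` B -> (infsup gradV f g F G U A y <= infsup gradV f g F G U B y)%E.
Proof.
move=> AB; apply: le_ereal_inf_tmp => _ [v Uv <-].
apply: ge_ereal_inf; exists (ereal_sup [set (Vdot gradV f g F G y v th)%:E | th in A]).
  by exists v.
by apply: ereal_sup_le => _ [th Ath <-]; exists th => //; exact: AB.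
Qed.

Theorem proposition2 (R : realType) (n p m : nat)
  (f : 'cV[R]_n -> 'cV[R]_n) (g : 'cV[R]_n -> 'M[R]_(n, m))
  (F : 'cV[R]_n -> 'M[R]_(n, p)) (G : 'cV[R]_n -> 'M[R]_(n, m))
  (U : set 'cV[R]_m) (lo0 hi0 theta : 'cV[R]_(p + m))
  (x xd : R -> 'cV[R]_n) (u : R -> 'cV[R]_m)
  (dt eps : R) (tk : nat -> R) (M : R -> seq R)
  (V : 'cV[R]_n -> R) (gradV : 'cV[R]_n -> 'rV[R]_n)
  (D : set 'cV[R]_n) (gam : R -> R) :
  (* known dynamics *)
  loc_lipschitz f -> loc_lipschitz g ->
  (* unknown parameter lies in the known hyperrectangle Theta *)
  box lo0 hi0 theta ->
  (* x is a solution under the input signal u, xd its derivative *)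
  (forall s : R, 0 <= s -> U (u s)) ->
  (forall s : R, 0 < s -> forall i : 'I_n, is_derive s 1 (fun r => x r i 0) (xd s i 0)) ->
  (forall s : R, 0 <= s ->
     xd s = f (x s) + g (x s) *m u s + phi F G (x s) (u s) *m theta) ->
  (* the integrals of the identification scheme exist *)
  (forall t : R, dt <= t ->
     (forall i : 'I_n, wintegrable dt t (fun s => xd s i 0)) /\
     (forall i : 'I_n, wintegrable dt t (fun s => f (x s) i 0)) /\
     (forall i : 'I_n, wintegrable dt t (fun s => (g (x s) *m u s) i 0)) /\
     (forall (i : 'I_n) (j : 'I_(p + m)), wintegrable dt t (fun s => phi F G (x s) (u s) i j))) ->
  (* identification scheme *)
  0 < dt -> 0 < eps -> tk 0%N = 0 -> (forall k, tk k < tk k.+1) ->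
  (forall t tau, tau \in M t -> dt <= tau <= t) ->
  (* Lyapunov function *)
  (forall y : 'cV[R]_n, differentiable V y /\
     forall h : 'cV[R]_n, 'd V y h = (gradV y *m h) 0 0) ->
  continuous gradV ->
  (forall y : 'cV[R]_n, 0 <= V y) -> V 0 = 0 -> (forall y : 'cV[R]_n, y != 0 -> 0 < V y) ->
  classK gam ->
  (forall y : 'cV[R]_n, D y -> infsup gradV f g F G U (box lo0 hi0) y <= (- gam (V y))%:E)%E ->
  forall (k : nat) (y : 'cV[R]_n), D y ->
    (infsup gradV f g F G U
       (Xi lo0 hi0 tk
          (fun t => [seq record f g F G x xd u dt tau | tau <- M t]) eps k) y
     <= (- gam (V y))%:E)%E.
Proof.
move=> _ _ Theta_theta _ _ ode integ _ eps_gt0 _ _ M_window _ _ _ _ _ _ hyp k y Dy.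
apply: le_trans (hyp y Dy); apply: le_infsup; apply: Xi_sub_Theta Theta_theta _ k.
move=> t _ /mapP[tau /M_window/andP[dt_tau _] ->] i.
have [_ [intf [intg intphi]]] := integ tau dt_tau.
rewrite residual_record_eq0 // ?mxE ?oppr_le0 ?ltW //.
by move=> s /andP[s_ge _]; apply: ode; lra.
Qed.
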